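(* Let $n\ge 2$, $b>0$, $\rho=e^{2\pi i/n}$, and for $\lambda\in\mathbb{C}$ let $\zeta=\lambda^{1/n}$ denote the principal $n$-th root and $\tilde r_j(\lambda)=\exp(\rho^{j-1}\lambda^{1/n}b)$, $j=1,\dots,n$. For every $\beta\in(0,1)$ there is $\delta=\delta(\beta)>0$, with $\delta(\beta)\to0^+$ as $\beta\to0^+$, such that for all $j,k\in\{1,\dots,n\}$ and all $\lambda\in\mathbb{C}$, $$|\tilde r_k(\lambda)-\tilde r_j(\lambda)|\ge\beta\max\{|\tilde r_j(\lambda)|,|\tilde r_k(\lambda)|\}$$ provided $(\rho^{k-1}-\rho^{j-1})\zeta b\notin\bigcup_{m\in\mathbb{Z}}\{z\in\mathbb{C}:|z-2\pi i m|<\delta\}$.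
   Context: The $\tilde r_j(\lambda)$ are the Floquet multipliers of the equation $u^{(n)}=\lambda u$ with period $b$. *)

From Stdlib Require Import Reals ZArith.
From Coquelicot Require Import Coquelicot.
Open Scope R_scope.

Definition Cexp (z : C) : C :=
  (exp (fst z) * cos (snd z), exp (fst z) * sin (snd z)).

(* principal argument, in (-PI, PI]; Carg 0 = 0 *)
Definition Carg (z : C) : R :=
  let x := fst z in let y := snd z in
  if Rlt_dec 0 x then atan (y / x)
  else if Rlt_dec x 0 then
    (if Rle_dec 0 y then atan (y / x) + PI else atan (y / x) - PI)
  else if Rlt_dec 0 y then PI / 2
  else if Rlt_dec y 0 then - (PI / 2)
  else 0.

Definition Cprinc_root (n : nat) (z : C) : C :=
  if Req_EM_T (Cmod z) 0 then RtoC 0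
  else Cmult (RtoC (Rpower (Cmod z) (/ INR n)))
             (Cexp (0, Carg z / INR n)).

Fixpoint Cpown (z : C) (k : nat) : C :=
  match k with O => RtoC 1 | S k' => Cmult z (Cpown z k') end.

Definition rho (n : nat) : C := Cexp (0, 2 * PI / INR n).

Definition rtilde (n : nat) (b : R) (j : nat) (lam : C) : C :=
  Cexp (Cmult (Cmult (Cpown (rho n) (j - 1)) (Cprinc_root n lam)) (RtoC b)).

From Stdlib Require Import Reals ZArith Lra Psatz.
From Coquelicot Require Import Coquelicot.
Open Scope R_scope.

(* Write w = (r_k - r_j) zeta b = x + i y, so that r~_k = r~_j e^w and
   |r~_k - r~_j| = |r~_j| |e^w - 1|, while max(|r~_j|, |r~_k|) = |r~_j| max(1, e^x).
   It therefore suffices to bound |e^w - 1| >= beta max(1, e^x) when w is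
   delta-far from 2 pi i Z; by the symmetry w -> -w we may take x <= 0.  Put
   T = beta / (1 - beta) and delta = 9 T.  If x <= -T then e^x <= 1 / (1 + T), so
   |e^w - 1| >= 1 - e^x >= beta.  Otherwise x is small, so y (reduced modulo 2 pi)
   is of order T and 1 - cos y >= y^2 / 16 gives |e^w - 1|^2 >= 5 T^2 >= beta^2. *)

Definition sep_radius (beta : R) : R := 9 * (beta / (1 - beta)).

Lemma sep_radius_pos (beta : R) : 0 < beta < 1 -> 0 < sep_radius beta.
Proof.
  intros hbeta; unfold sep_radius.
  apply Rmult_lt_0_compat; [lra | apply Rdiv_lt_0_compat; lra].
Qed.

Lemma sep_radius_right0 : filterlim sep_radius (at_right 0) (locally 0).
Proof.
  apply filterlim_locally; intros eps.
  assert (heps := cond_pos eps).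
  exists (mkposreal (Rmin (1/2) (eps/18)) ltac:(apply Rmin_pos; lra)).
  intros beta hball hbeta; simpl in hball.
  unfold ball in hball |- *; simpl in hball |- *.
  unfold AbsRing_ball, abs, minus, plus, opp in hball |- *; simpl in hball |- *.
  rewrite Ropp_0, Rplus_0_r in hball |- *.
  rewrite Rabs_right in hball by lra.
  assert (hmin1 := Rmin_l (1/2) (eps/18)); assert (hmin2 := Rmin_r (1/2) (eps/18)).
  assert (hpos := sep_radius_pos beta ltac:(lra)).
  rewrite Rabs_right by lra.
  assert (sep_radius beta <= 18 * beta).
  { unfold sep_radius; apply Rmult_le_reg_r with (1 - beta); [lra|].
    field_simplify; nra. }
  lra.
Qed.

Lemma cos_sub_2PI_IZR (y : R) (m : Z) : cos (y - 2 * PI * IZR m) = cos y.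
Proof.
  assert (hsin : sin (IZR m * PI) = 0) by (apply sin_eq_0_1; eauto).
  replace (2 * PI * IZR m) with (2 * (IZR m * PI)) by ring.
  rewrite cos_minus, cos_2a_sin, sin_2a, hsin; ring.
Qed.

Lemma exists_angle_rep (y : R) : exists m : Z, - PI <= y - 2 * PI * IZR m <= PI.
Proof.
  assert (hPI := PI_RGT_0).
  exists (Int_part (y / (2 * PI) + / 2)).
  destruct (base_Int_part (y / (2 * PI) + / 2)) as [hlo hhi].
  set (m := Int_part _) in hlo, hhi |- *.
  assert (hfrac : - / 2 <= y / (2 * PI) - IZR m <= / 2) by lra.
  replace (y - 2 * PI * IZR m) with (2 * PI * (y / (2 * PI) - IZR m)) by (field; lra).
  split; nra.
Qed.

Lemma one_sub_cos_ge_sq (y : R) : - PI <= y <= PI -> y ^ 2 / 16 <= 1 - cos y.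
Proof.
  intros hy.
  assert (hPI4 := PI_4); assert (hPI := PI_RGT_0).
  destruct (Rle_dec (PI / 2) (Rabs y)) as [hfar | hnear].
  - assert (cos y <= 0).
    { destruct (Rle_dec 0 y).
      - rewrite Rabs_right in hfar by lra; apply cos_le_0; lra.
      - rewrite Rabs_left in hfar by lra; rewrite <- cos_neg; apply cos_le_0; lra. }
    nra.
  - assert (hyb : - PI / 2 <= y <= PI / 2)
      by (unfold Rabs in hnear; destruct (Rcase_abs y); lra).
    destruct (cos_bound y 0 (proj1 hyb) (proj2 hyb)) as [_ htaylor].
    unfold cos_approx, cos_term in htaylor; simpl in htaylor.
    assert (y ^ 2 <= 4) by nra.
    assert (y ^ 2 / 3 <= 1 - cos y) by nra.
    nra.
Qed.

(* [expm1_norm2 x y = |e^(x + i y) - 1|^2], see [Cmod_Cexp_sub1]. *)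
Lemma exp_le_1 (x : R) : x <= 0 -> exp x <= 1.
Proof.
  intros hx; rewrite <- exp_0.
  destruct (Req_dec x 0) as [-> | hx0]; [lra | left; apply exp_increasing; lra].
Qed.

Definition expm1_norm2 (x y : R) : R := (1 - exp x) ^ 2 + 2 * exp x * (1 - cos y).

Lemma expm1_norm2_opp (x y : R) :
  expm1_norm2 (- x) (- y) = exp (- x) ^ 2 * expm1_norm2 x y.
Proof.
  unfold expm1_norm2; rewrite cos_neg, exp_Ropp.
  assert (exp x <> 0) by (apply Rgt_not_eq, exp_pos).
  field; assumption.
Qed.

Lemma expm1_norm2_ge_left (beta x y : R) : 0 < beta < 1 -> x <= 0 ->
  (forall m : Z, sep_radius beta ^ 2 <= x ^ 2 + (y - 2 * PI * IZR m) ^ 2) ->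
  beta ^ 2 <= expm1_norm2 x y.
Proof.
  intros hbeta hx hsep; unfold expm1_norm2.
  set (T := beta / (1 - beta)) in hsep.
  assert (hTbeta : beta <= T /\ beta * (1 + T) = T).
  { unfold T; split; [apply Rmult_le_reg_r with (1 - beta); [lra|]; field_simplify; nra
                     | field; lra]. }
  assert (hex := exp_pos x).
  assert (hex1 := exp_le_1 x hx).
  assert (hcos := COS_bound y).
  destruct (Rle_dec T (- x)) as [hfar | hnear].
  - assert (hinv : exp x * exp (- x) = 1) by (rewrite <- exp_plus, Rplus_opp_r; apply exp_0).
    assert (1 + T <= exp (- x)) by (pose proof (exp_ineq1_le (- x)); lra).
    assert (beta <= 1 - exp x) by nra.
    nra.
  - destruct (exists_angle_rep y) as [m hm].
    rewrite <- (cos_sub_2PI_IZR y m).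
    specialize (hsep m); unfold sep_radius in hsep; fold T in hsep.
    set (y' := y - 2 * PI * IZR m) in hm, hsep |- *.
    assert (hPI4 := PI_4); assert (hPI := PI_RGT_0).
    assert (hy' : 80 * T ^ 2 <= y' ^ 2) by nra.
    assert (hT : T < 1 / 2) by nra.
    assert (1 / 2 < exp x) by (pose proof (exp_ineq1_le x); lra).
    assert (hc := one_sub_cos_ge_sq y' hm).
    nra.
Qed.

Lemma expm1_norm2_ge (beta x y : R) : 0 < beta < 1 ->
  (forall m : Z, sep_radius beta ^ 2 <= x ^ 2 + (y - 2 * PI * IZR m) ^ 2) ->
  (beta * Rmax 1 (exp x)) ^ 2 <= expm1_norm2 x y.
Proof.
  intros hbeta hsep.
  destruct (Rle_dec x 0) as [hx | hx].
  - rewrite Rmax_left by (apply exp_le_1, hx).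
    replace ((beta * 1) ^ 2) with (beta ^ 2) by ring.
    exact (expm1_norm2_ge_left beta x y hbeta hx hsep).
  - rewrite Rmax_right by (pose proof (exp_ineq1_le x); lra).
    assert (hopp : beta ^ 2 <= expm1_norm2 (- x) (- y)).
    { apply expm1_norm2_ge_left; [exact hbeta | lra |].
      intros m; specialize (hsep (- m)%Z); rewrite opp_IZR in hsep; nra. }
    rewrite expm1_norm2_opp in hopp.
    assert (hinv : exp x * exp (- x) = 1) by (rewrite <- exp_plus, Rplus_opp_r; apply exp_0).
    assert (hex := exp_pos x).
    replace ((beta * exp x) ^ 2) with (exp x ^ 2 * beta ^ 2) by ring.
    apply Rmult_le_compat_l with (r := exp x ^ 2) in hopp; [| nra].
    replace (exp x ^ 2 * (exp (- x) ^ 2 * expm1_norm2 x y))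
      with ((exp x * exp (- x)) ^ 2 * expm1_norm2 x y) in hopp by ring.
    rewrite hinv in hopp; lra.
Qed.

Lemma Cexp_add (u w : C) : Cexp (u + w) = (Cexp u * Cexp w)%C.
Proof.
  destruct u as [p q], w as [x y].
  unfold Cexp, Cmult; simpl.
  rewrite exp_plus, cos_plus, sin_plus.
  f_equal; ring.
Qed.

Lemma Cmod_Cexp (u : C) : Cmod (Cexp u) = exp (fst u).
Proof.
  destruct u as [p q]; unfold Cmod, Cexp; cbn [fst snd].
  replace ((exp p * cos q) ^ 2 + (exp p * sin q) ^ 2)
    with (exp p ^ 2 * (sin q ^ 2 + cos q ^ 2)) by ring.
  assert (hpyth := sin2_cos2 q); unfold Rsqr in hpyth.
  replace (sin q ^ 2 + cos q ^ 2) with 1 by (rewrite <- hpyth; ring).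
  rewrite Rmult_1_r; apply sqrt_pow2, Rlt_le, exp_pos.
Qed.

Lemma Cmod_Cexp_sub1 (x y : R) : Cmod (Cexp (x, y) - 1) = sqrt (expm1_norm2 x y).
Proof.
  unfold Cmod, Cexp, expm1_norm2; simpl; f_equal.
  assert (hpyth := sin2_cos2 y); unfold Rsqr in hpyth.
  transitivity (exp x ^ 2 * (sin y * sin y + cos y * cos y) - 2 * exp x * cos y + 1);
    [ring | rewrite hpyth; ring].
Qed.

Lemma Cmod_ge_sq (d : R) (z : C) : 0 <= d -> Cmod z >= d -> d ^ 2 <= fst z ^ 2 + snd z ^ 2.
Proof.
  intros hd hz.
  rewrite <- pow2_sqrt by nra.
  apply pow_incr; unfold Cmod in hz; lra.
Qed.

Lemma Cexp_add_sub_ge (beta : R) (u w : C) : 0 < beta < 1 ->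
  (forall m : Z, Cmod (w - (0, 2 * PI * IZR m)) >= sep_radius beta) ->
  Cmod (Cexp (u + w) - Cexp u) >= beta * Rmax (Cmod (Cexp u)) (Cmod (Cexp (u + w))).
Proof.
  intros hbeta hsep.
  destruct w as [x y].
  assert (hfactor : (Cexp u * Cexp (x, y) - Cexp u = Cexp u * (Cexp (x, y) - 1))%C) by ring.
  rewrite Cexp_add, hfactor, !Cmod_mult, Cmod_Cexp_sub1, (Cmod_Cexp (x, y)); simpl fst.
  rewrite <- (Rmult_1_r (Cmod (Cexp u))) at 2.
  rewrite RmaxRmult by apply Cmod_ge_0.
  assert (hsep2 : forall m : Z, sep_radius beta ^ 2 <= x ^ 2 + (y - 2 * PI * IZR m) ^ 2).
  { intros m.
    replace (x ^ 2 + (y - 2 * PI * IZR m) ^ 2)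
      with (fst (Cminus (x, y) (0, 2 * PI * IZR m)) ^ 2
            + snd (Cminus (x, y) (0, 2 * PI * IZR m)) ^ 2)
      by (cbn [fst snd Cminus Cplus Copp]; ring).
    apply Cmod_ge_sq; [apply Rlt_le, sep_radius_pos, hbeta | apply hsep]. }
  assert (hmax : 0 <= beta * Rmax 1 (exp x))
    by (apply Rmult_le_pos; [lra | apply Rle_trans with 1; [lra | apply Rmax_l]]).
  assert (hroot : beta * Rmax 1 (exp x) <= sqrt (expm1_norm2 x y)).
  { rewrite <- (sqrt_pow2 _ hmax).
    apply sqrt_le_1_alt, expm1_norm2_ge; assumption. }
  assert (hmod := Cmod_ge_0 (Cexp u)).
  apply Rle_ge; nra.
Qed.

Theorem corollary1 (n : nat) (b : R) (hn : (2 <= n)%nat) (hb : 0 < b) :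
  exists delta : R -> R,
    (forall beta, 0 < beta < 1 -> 0 < delta beta) /\
    filterlim delta (at_right 0) (locally 0) /\
    forall beta, 0 < beta < 1 ->
    forall (j k : nat) (lam : C),
      (1 <= j <= n)%nat -> (1 <= k <= n)%nat ->
      (forall m : Z,
         Cmod (Cminus
                 (Cmult (Cmult (Cminus (Cpown (rho n) (k - 1)) (Cpown (rho n) (j - 1)))
                               (Cprinc_root n lam)) (RtoC b))
                 (0, 2 * PI * IZR m)) >= delta beta) ->
      Cmod (Cminus (rtilde n b k lam) (rtilde n b j lam))
        >= beta * Rmax (Cmod (rtilde n b j lam)) (Cmod (rtilde n b k lam)).
Proof.
  exists sep_radius; split; [exact sep_radius_pos | split; [exact sep_radius_right0 |]].
  intros beta hbeta j k lam _ _ hsep.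
  unfold rtilde.
  set (rk := Cpown (rho n) (k - 1)) in hsep |- *.
  set (rj := Cpown (rho n) (j - 1)) in hsep |- *.
  set (zeta := Cprinc_root n lam) in hsep |- *.
  replace (rk * zeta * b)%C with (rj * zeta * b + (rk - rj) * zeta * b)%C by ring.
  exact (Cexp_add_sub_ge beta _ _ hbeta hsep).
Qed.
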